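(* Let $h\in\mathcal H$, $k_0=k_0(h)$, $k_f=k_f(h)$. Then $$k_0\le \operatorname{hdepth}(h)\le \min\{k_f,\ k_0+c(h)\}.$$
   Context: $\mathcal H$ denotes the set of nonzero functions $h:\mathbb Z\to\mathbb Z_{\ge 0}$ such that $h(j)=0$ for all sufficiently negative $j$. For $h\in\mathcal H$ and integers $k\le d$, set $\beta_k^d(h)=\sum_{j\le k}(-1)^{k-j}\binom{d-j}{k-j}h(j)$, and $\operatorname{hdepth}(h)=\max\{d\in\mathbb Z:\ \beta_k^d(h)\ge 0\text{ for all integers }k\le d\}$. Further $k_0(h)=\min\{j: h(j)>0\}$; $k_f(h)=\min\{j\ge k_0(h): h(j+1)=0\}$, with $k_f(h)=+\infty$ if no such $j$ exists; and $c(h)=\left\lfloor h(k_0(h)+1)/h(k_0(h))\right\rfloor$. *)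

From mathcomp Require Import all_boot all_order all_algebra.
Set Implicit Arguments. Unset Strict Implicit. Unset Printing Implicit Defensive.
Import Order.TTheory GRing.Theory Num.Theory.
Local Open Scope ring_scope.

Definition inH (h : int -> nat) : Prop :=
  (exists j, h j <> 0%N) /\ (exists N : int, forall j : int, j < N -> h j = 0%N).

(* beta_k^d(h) = sum_{j <= k} (-1)^(k-j) C(d-j, k-j) h(j), computed under the
   knowledge that h(j) = 0 for all j < L (L a lower bound of the support):
   writing j = k - i, the sum runs over i = 0 .. k - L, and
   (-1)^(k-j) C(d-j,k-j) = (-1)^i C((d-k)+i, i).  (For k <= d.) *)
Definition beta_from (L : int) (h : int -> nat) (k d : int) : int :=
  \sum_(i < `|k - L|%N.+1)
     (-1) ^+ i * ('C(`|d - k|%N + i, i))%:R * (h (k - i%:Z))%:R.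

Definition hdepth_ok (L : int) (h : int -> nat) (d : int) : Prop :=
  forall k : int, k <= d -> 0 <= beta_from L h k d.

Definition is_hdepth (L : int) (h : int -> nat) (D : int) : Prop :=
  hdepth_ok L h D /\ forall d : int, hdepth_ok L h d -> d <= D.

From mathcomp Require Import all_boot all_order all_algebra.
From mathcomp Require Import zify ring.
From Stdlib Require Import Classical.
Set Implicit Arguments. Unset Strict Implicit. Unset Printing Implicit Defensive.
Import Order.TTheory GRing.Theory Num.Theory.
Local Open Scope ring_scope.

(* beta_k^d(h) is an alternating binomial sum; Pascal's rule gives
     beta_k^d = beta_k^(d-1) - beta_(k-1)^(d-1)        (k0 < k < d),
     beta_d^d + beta_(d-1)^(d-1) = h(d)                (k0 < d),
   while beta_k^d = 0 for k < k0 and beta_k0^d = h(k0).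
   If d is admissible (all beta_k^d >= 0), the first identity shows by
   induction on k that beta_k^(d-1) >= h(k0) > 0 for k0 <= k < d; hence
   d - 1 is admissible, and the admissible degrees form a down-set.
   It contains k0 (only beta_k0^k0 = h(k0) is nonzero).  Admissibility of d
   forces d <= k0 + c(h), because beta_(k0+1)^d = h(k0+1) - (d-k0) h(k0);
   and d = k_f + 1 is never admissible, because the diagonal identity would
   give beta_(k_f+1)^(k_f+1) = -beta_(k_f)^(k_f) < 0.  A bounded nonempty set
   of integers has a maximum, which is hdepth(h). *)

Definition alt_binom_sum (n m : nat) (f : nat -> nat) : int :=
  \sum_(i < n.+1) (-1) ^+ i * ('C(m + i, i))%:R * (f i)%:R.

Lemma beta_fromE (L : int) (h : int -> nat) (k d : int) : beta_from L h k d =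
  alt_binom_sum (absz (k - L)) (absz (d - k)) (fun i => h (k - i%:Z)).
Proof. by []. Qed.

Lemma alt_binom_sum0 (m : nat) (f : nat -> nat) : alt_binom_sum 0 m f = (f 0%N)%:R.
Proof. by rewrite /alt_binom_sum big_ord1 /= bin0 expr0 !mul1r. Qed.

(* Pascal's rule C(m+1+i, i) = C(m+i, i) + C(m+1+(i-1), i-1), summed. *)
Lemma alt_binom_sum_pascal (n m : nat) (f : nat -> nat) :
  alt_binom_sum n.+1 m.+1 f =
  alt_binom_sum n.+1 m f - alt_binom_sum n m.+1 (fun i => f i.+1).
Proof.
rewrite /alt_binom_sum big_ord_recl [in X in _ = X - _]big_ord_recl /= !bin0.
rewrite -addrA; congr (_ + _); rewrite -sumrB; apply: eq_bigr => i _.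
rewrite /bump /= add1n addnS binS addSnnS natrD exprS; ring.
Qed.

Lemma alt_binom_sum_diag (n : nat) (f : nat -> nat) :
  alt_binom_sum n.+1 0 f = (f 0%N)%:R - alt_binom_sum n 0 (fun i => f i.+1).
Proof.
rewrite /alt_binom_sum big_ord_recl /= bin0 -sumrN.
congr (_ + _); first by rewrite expr0 !mul1r.
apply: eq_bigr => i _; rewrite /bump /= add1n !add0n !binn exprS; ring.
Qed.

Lemma alt_binom_sum_shift (n m : nat) (h : int -> nat) (k : int) :
  alt_binom_sum n m (fun i => h (k - i.+1%:Z)) =
  alt_binom_sum n m (fun i => h (k - 1 - i%:Z)).
Proof.
apply: eq_bigr => i _; congr (_ * (h _)%:R); lia.
Qed.

Section Beta.

Variables (h : int -> nat) (k0 : int).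

Lemma beta_k0 (d : int) : beta_from k0 h k0 d = (h k0)%:R.
Proof. by rewrite beta_fromE subrr alt_binom_sum0 subr0. Qed.

Lemma beta_pascal (k d : int) : k0 < k -> k < d ->
  beta_from k0 h k d = beta_from k0 h k (d - 1) - beta_from k0 h (k - 1) (d - 1).
Proof.
move=> lt_k0k lt_kd; rewrite !beta_fromE.
have -> : absz (k - k0)%R = (absz (k - 1 - k0)%R).+1 by lia.
have -> : absz (d - k)%R = (absz (d - 1 - k)%R).+1 by lia.
have -> : absz (d - 1 - (k - 1))%R = (absz (d - 1 - k)%R).+1 by lia.
by rewrite alt_binom_sum_pascal alt_binom_sum_shift.
Qed.

Lemma beta_diag (d : int) : k0 < d ->
  beta_from k0 h d d + beta_from k0 h (d - 1) (d - 1) = (h d)%:R.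
Proof.
move=> lt_k0d; rewrite !beta_fromE !subrr.
have -> : absz (d - k0)%R = (absz (d - 1 - k0)%R).+1 by lia.
by rewrite alt_binom_sum_diag alt_binom_sum_shift subr0 subrK.
Qed.

Hypothesis h_below : forall j : int, j < k0 -> h j = 0%N.

Lemma beta_below (k d : int) : k < k0 -> beta_from k0 h k d = 0.
Proof. by move=> lt_k; apply: big1 => i _; rewrite h_below ?mulr0 //; lia. Qed.

Lemma beta_pred_ge (d : int) : hdepth_ok k0 h d ->
  forall k : int, k0 <= k -> k < d -> (h k0)%:R <= beta_from k0 h k (d - 1).
Proof.
move=> ok_d k le_k0k; have -> : k = k0 + (absz (k - k0))%:Z by lia.
elim: (absz (k - k0)) => [|n IHn] lt_kd; first by rewrite addr0 beta_k0.
have lt_k0k : k0 < k0 + n.+1%:Z by lia.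
have rec := beta_pascal lt_k0k lt_kd.
have shift : k0 + n.+1%:Z - 1 = k0 + n%:Z by lia.
rewrite shift in rec.
have := ok_d (k0 + n.+1%:Z) ltac:(lia); have := IHn ltac:(lia); lia.
Qed.

Lemma hdepth_ok_pred (d : int) : hdepth_ok k0 h d -> hdepth_ok k0 h (d - 1).
Proof.
move=> ok_d k le_k; case: (ltP k k0) => [lt_k|ge_k]; first by rewrite beta_below.
by have := beta_pred_ge ok_d ge_k ltac:(lia); lia.
Qed.

Lemma hdepth_ok_le (d d' : int) : hdepth_ok k0 h d -> d' <= d -> hdepth_ok k0 h d'.
Proof.
move=> ok_d le_d'd; have -> : d' = d - (absz (d - d'))%:Z by lia.
elim: (absz (d - d')) => [|n IHn]; first by rewrite subr0.
have -> : d - n.+1%:Z = d - n%:Z - 1 by lia.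
exact: hdepth_ok_pred.
Qed.

Lemma hdepth_ok_k0 : hdepth_ok k0 h k0.
Proof.
move=> k le_k; case: (ltP k k0) => [lt_k|ge_k]; first by rewrite beta_below.
have -> : k = k0 by lia.
by rewrite beta_k0.
Qed.

Hypothesis h_k0_pos : (0 < h k0)%N.

(* beta_(k0+1)^d = h(k0+1) - (d - k0) h(k0) >= 0 bounds d by k0 + c(h). *)
Lemma hdepth_ok_le_c (d : int) :
  hdepth_ok k0 h d -> d <= k0 + (divn (h (k0 + 1)) (h k0))%:Z.
Proof.
move=> ok_d; case: (lerP d k0) => [le_d|lt_d].
  by apply: le_trans le_d _; rewrite lerDl.
have := ok_d (k0 + 1) ltac:(lia); rewrite beta_fromE.
have -> : absz (k0 + 1 - k0)%R = 1%N by lia.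
rewrite /alt_binom_sum big_ord_recr big_ord1 /= bin0 bin1 subr0 addrK expr0 expr1.
rewrite !mul1r mulN1r mulNr -natrM subr_ge0 ler_nat -leq_divRL //.
have -> : absz (d - (k0 + 1))%R = (absz (d - k0)%R).-1 by lia.
lia.
Qed.

Lemma hdepth_ok_le_kf (kf d : int) : k0 <= kf -> h (kf + 1) = 0%N ->
  hdepth_ok k0 h d -> d <= kf.
Proof.
move=> le_k0kf hkf ok_d; rewrite leNgt; apply/negP => lt_kfd.
have ok_kf1 : hdepth_ok k0 h (kf + 1) by apply: hdepth_ok_le ok_d _; lia.
have lt_k0kf1 : k0 < kf + 1 by lia.
have diag := beta_diag lt_k0kf1.
have top := ok_kf1 (kf + 1) (lexx _).
have lt_kf : kf < kf + 1 by lia.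
have below := beta_pred_ge ok_kf1 le_k0kf lt_kf.
rewrite hkf addrK in diag below; move: h_k0_pos; lia.
Qed.

End Beta.

Lemma nat_pred_has_max (P : nat -> Prop) (c : nat) :
  P 0%N -> (forall n, P n -> (n <= c)%N) ->
  exists m, P m /\ forall n, P n -> (n <= m)%N.
Proof.
move=> P0 bounded.
suff [m [Pm max_m]] : exists m, P m /\ forall n, P n -> (n <= c)%N -> (n <= m)%N.
  by exists m; split=> // n Pn; apply: max_m Pn (bounded n Pn).
elim: c {bounded} => [|c [m [Pm max_m]]]; first by exists 0%N.
case: (classic (P c.+1)) => [Pc1|nPc1]; first by exists c.+1.
exists m; split=> // n Pn le_n; apply: max_m => //.
by case: (eqVneq n c.+1) => [eq_n|]; [rewrite eq_n in Pn | lia].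
Qed.

Lemma int_pred_has_max (P : int -> Prop) (a b : int) :
  P a -> (forall d, P d -> d <= b) -> exists D, P D /\ forall d, P d -> d <= D.
Proof.
move=> Pa bounded.
have [|n Pn|m [Pm max_m]] :=
  @nat_pred_has_max (fun n => P (a + n%:Z)) (absz (b - a)); first by rewrite addr0.
- by have := bounded _ Pn; lia.
exists (a + m%:Z); split=> // d Pd; case: (lerP d a) => [|lt_ad]; first lia.
have def_d : d = a + (absz (d - a))%:Z by lia.
rewrite def_d in Pd *; have := max_m _ Pd; lia.
Qed.

Theorem proposition1p5 (h : int -> nat) (k0 : int) :
  inH h ->
  (* k0 = k0(h) = min { j | h j > 0 } *)
  (0 < h k0)%N -> (forall j : int, j < k0 -> h j = 0%N) ->
  exists D : int,
    (* D = hdepth(h) (the maximum exists) *)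
    is_hdepth k0 h D /\
    k0 <= D /\
    (* hdepth(h) <= k0 + c(h), with c(h) = floor(h(k0+1)/h(k0)) *)
    D <= k0 + (divn (h (k0 + 1)) (h k0))%:Z /\
    (* hdepth(h) <= k_f(h) (vacuous when k_f(h) = +oo) *)
    (forall kf : int,
       k0 <= kf -> h (kf + 1) = 0%N ->
       (forall j : int, k0 <= j -> j < kf -> h (j + 1) <> 0%N) ->
       D <= kf).
Proof.
move=> _ h_k0_pos h_below.
have [D [ok_D max_D]] :=
  int_pred_has_max (hdepth_ok_k0 h_below) (hdepth_ok_le_c h_k0_pos).
exists D; split; first by split.
split; first exact: max_D (hdepth_ok_k0 h_below).
split; first exact: (hdepth_ok_le_c h_k0_pos ok_D).
move=> kf le_k0kf hkf _; exact: (hdepth_ok_le_kf h_below h_k0_pos le_k0kf hkf ok_D).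
Qed.
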